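(* Let $M$ be a cubic $3$-pole (loops and parallel edges allowed) with exactly three dangling edges, incident with three pairwise distinct vertices $v_1,v_2,v_3$. For each vertex $x$ of $M$ choose an even $(2,2,2)$-pole $H_x$ and a bijection between the three connectors of $H_x$ and the three edge ends at $x$. Construct the $(2,2,2)$-pole $H_M(S_1,S_2,S_3)$ by replacing every vertex $x$ by $H_x$ and every edge of $M$ by two parallel ''strands'': for each edge of $M$ joining ends at $x$ and $y$ (possibly $x=y$ for a loop), perform the junction of the connector of $H_x$ assigned to the first end with the connector of $H_y$ assigned to the second end; for the dangling edge at $v_i$, the connector of $H_{v_i}$ assigned to that dangling edge is left unjoined and becomes $S_i$. Then $H_M(S_1,S_2,S_3)$ is an even $(2,2,2)$-pole.
   Context: A multipole consists of vertices and edges; each edge has two ends, each either incident with a vertex or free; a free end is a semiedge. All multipoles are cubic (every vertex incident with exactly three edge ends). Semiedges are partitioned into connectors; a $(2,2,2)$-pole has three connectors of size $2$. The junction of two connectors of size $2$ identifies their semiedges in pairs (along an arbitrary bijection) to form two edges. Let $\mathbb{K}=\{(0,1),(1,0),(1,1)\}\subset\mathbb{Z}_2\times\mathbb{Z}_2$. A colouring of a multipole assigns elements of $\mathbb{K}$ to edges so that at every vertex the three incident edge ends get distinct colours. Flow through a connector $S$: $\varphi_*(S)=\sum_{e\in S}\varphi(e)\in\mathbb{Z}_2\times\mathbb{Z}_2$. A $(2,2,2)$-pole is even if for every colouring $\varphi$ the number of its connectors $S$ with $\varphi_*(S)\ne0$ is even. *)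

From HB Require Import structures.
From mathcomp Require Import all_boot all_order all_algebra.
Set Implicit Arguments. Unset Strict Implicit. Unset Printing Implicit Defensive.
Import GRing.Theory.
Local Open Scope ring_scope.

Definition colour : Type := ('Z_2 * 'Z_2)%type.

(** A multipole: vertices, edges, edge ends.  Every end belongs to an edge
    ([end_edge]) and is either incident with a vertex or free ([end_vtx] = None). *)
Record multipole := Multipole {
  mvtx : finType;
  medg : finType;
  mend : finType;
  end_edge : mend -> medg;
  end_vtx : mend -> option mvtx }.

Definition cubic (P : multipole) : Prop :=
  forall v : mvtx P, #|[set d : mend P | end_vtx d == Some v]| = 3%N.

Definition two_ended (P : multipole) : Prop :=
  forall e : medg P, #|[set d : mend P | end_edge d == e]| = 2%N.

Definition colouring (P : multipole) (phi : medg P -> colour) : Prop :=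
  (forall e, phi e != 0) /\
  (forall d1 d2 : mend P, d1 != d2 -> end_vtx d1 != None ->
     end_vtx d1 = end_vtx d2 -> phi (end_edge d1) != phi (end_edge d2)).

Record pole222 := Pole222 {
  pmp :> multipole;
  pconn : 'I_3 -> 'I_2 -> mend pmp }.

Definition is_pole222 (P : pole222) : Prop :=
  (forall i k j l, pconn P i k = pconn P j l -> i = j /\ k = l) /\
  (forall d : mend P, end_vtx d = None <-> exists i k, pconn P i k = d).

Definition flow (P : pole222) (phi : medg P -> colour) (i : 'I_3) : colour :=
  \sum_(k < 2) phi (end_edge (pconn P i k)).

Definition even222 (P : pole222) : Prop :=
  forall phi : medg P -> colour, @colouring P phi ->
    ~~ odd #|[set i : 'I_3 | @flow P phi i != 0]|.

Section Construction.
Variables (M : multipole) (H : mvtx M -> pole222)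
  (gam : mend M -> 'I_3)        (* connector of H_x assigned to an end at x *)
  (flip : medg M -> bool)       (* bijection used for the junction along an edge *)
  (v : 'I_3 -> mvtx M)
  (g : 'I_3 -> mend M).         (* end at v_i of the i-th dangling edge *)

Definition cvtx := {x : mvtx M & mvtx (H x)}.
Definition bend := {x : mvtx M & mend (H x)}.
Definition bedg := {x : mvtx M & medg (H x)}.

Definition mkbend (x : mvtx M) (s : mend (H x)) : bend :=
  Tagged (fun z => mend (H z)) s.

(** the bijection between two connectors of size 2: identity or swap *)
Definition swap2 (b : bool) (k : 'I_2) : 'I_2 := if b then rev_ord k else k.

(** [jrel a b]: semiedges a and b are identified by a junction along an edge
    of M with ends d (at x) and d' (at y) *)
Definition jrel (a b : bend) : bool :=
  [exists d : mend M, exists d' : mend M, exists k : 'I_2,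
   exists x : mvtx M, exists y : mvtx M,
   [&& d != d', end_edge d == end_edge d', end_vtx d == Some x,
       end_vtx d' == Some y,
       a == mkbend (pconn (H x) (gam d) k) &
       b == mkbend (pconn (H y) (gam d') (swap2 (flip (end_edge d)) k))]].

Definition joined (a : bend) : bool := [exists b, jrel a b].

Definition Sbase (i : 'I_3) (k : 'I_2) : bend :=
  mkbend (pconn (H (v i)) (gam (g i)) k).

(** the ends of the composite: the ends of the H_x that are not joined
    (the second disjunct is redundant under the hypotheses of the theorem,
    it only makes the connectors S_i definable without proof obligations) *)
Definition kept (a : bend) : bool :=
  ~~ joined a || [exists i, exists k, a == Sbase i k].

Definition cend := {a : bend | kept a}.

Definition bedge_of (a : bend) : bedg :=
  Tagged (fun z => medg (H z)) (end_edge (tagged a)).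

(** edges of H_x whose ends are joined get merged *)
Definition erel (e f : bedg) : bool :=
  [exists a, exists b, [&& jrel a b, bedge_of a == e & bedge_of b == f]].

Definition eclass (e : bedg) : {set bedg} := [set f | connect erel e f].

Definition cedg := {S : {set bedg} | [exists e, S == eclass e]}.

Lemma eclass_is_class (e : bedg) : [exists e', eclass e == eclass e'].
Proof. by apply/existsP; exists e. Qed.

Definition cedge_of (e : bedg) : cedg := exist _ (eclass e) (eclass_is_class e).

Definition cend_edge (a : cend) : cedg := cedge_of (bedge_of (val a)).

Definition cend_vtx (a : cend) : option cvtx :=
  omap (fun w => Tagged (fun z => mvtx (H z)) w) (end_vtx (tagged (val a))).

Definition HM_mp : multipole := @Multipole cvtx cedg cend cend_edge cend_vtx.

Lemma Sbase_kept i k : kept (Sbase i k).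
Proof. by apply/orP; right; apply/existsP; exists i; apply/existsP; exists k. Qed.

Definition cconn (i : 'I_3) (k : 'I_2) : cend := exist _ (Sbase i k) (Sbase_kept i k).

Definition HM : pole222 := @Pole222 HM_mp cconn.

End Construction.

(* Colour the composite pole and, for every end d of M at a vertex x, let f(d)
   be the flow of the induced colouring of H_x through the connector assigned
   to d.  Evenness of each H_x says that at every vertex an even number of ends
   have f(d) <> 0.  The two ends of an inner edge of M carry the same flow,
   since the two strands of the edge are single edges of the composite, so
   inner edges contribute an even number of such ends.  What remains are the
   ends of the three dangling edges, and f there is the flow of the composite
   through S_1, S_2, S_3. *)
From mathcomp Require Import all_boot all_order all_algebra.
Set Implicit Arguments. Unset Strict Implicit. Unset Printing Implicit Defensive.

Lemma sum_even (I : finType) (P : pred I) (F : I -> nat) :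
  (forall i, P i -> ~~ odd (F i)) -> ~~ odd (\sum_(i | P i) F i).
Proof.
move=> evenF; apply: (big_ind (fun n => ~~ odd n)) => // m n.
by rewrite oddD => /negbTE-> /negbTE->.
Qed.

Lemma cards2_eq (T : finType) (A : {set T}) a b :
  #|A| = 2 -> a \in A -> b \in A -> a != b -> A = [set a; b].
Proof.
move=> cardA aA bA ab; apply/eqP; rewrite eq_sym eqEcard subUset !sub1set aA bA.
by rewrite cards2 ab cardA.
Qed.

Lemma sum_set2 (T : finType) (F : T -> nat) a b :
  a != b -> \sum_(d in [set a; b]) F d = F a + F b.
Proof. by move=> ab; rewrite big_setU1 ?big_set1 // inE. Qed.

Lemma card_preim_in_bij (T I : finType) (f : T -> I) (A : {set T}) (P : pred I) :
  {in A &, injective f} -> #|A| = #|I| ->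
  #|[set a in A | P (f a)]| = #|[set i | P i]|.
Proof.
move=> injf cardA.
have fA : f @: A = setT.
  by apply/eqP; rewrite eqEcard subsetT cardsT card_in_imset // cardA leqnn.
rewrite -[LHS](card_in_imset (f := f)); last first.
  by move=> a b /setIdP[aA _] /setIdP[bA _]; apply: injf.
apply: eq_card => i; rewrite [RHS]inE; apply/imsetP/idP => [[a /setIdP[_ Pa] ->] //|Pi].
have /imsetP[a aA fai] : i \in f @: A by rewrite fA.
by exists a; rewrite // inE aA -fai.
Qed.

Lemma swap2K b : involutive (swap2 b).
Proof. by case: b => k //=; rewrite /swap2 rev_ordK. Qed.

Section Composite.

Variables (M : multipole) (H : mvtx M -> pole222)
  (gam : mend M -> 'I_3) (flip : medg M -> bool).

Lemma jrel_sym (a b : bend H) : jrel gam flip a b -> jrel gam flip b a.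
Proof.
case/existsP=> d /existsP[d' /existsP[k /existsP[x /existsP[y]]]].
case/and5P=> dd' ee xd yd' /andP[/eqP-> /eqP->].
apply/existsP; exists d'; apply/existsP; exists d.
apply/existsP; exists (swap2 (flip (end_edge d)) k).
apply/existsP; exists y; apply/existsP; exists x.
by rewrite eq_sym dd' eq_sym ee xd yd' /= (eqP ee) swap2K !eqxx.
Qed.

Lemma erel_sym : symmetric (@erel _ H gam flip).
Proof.
suff erel_sym1 (e f : bedg H) : erel gam flip e f -> erel gam flip f e.
  by move=> e f; apply/idP/idP => /erel_sym1.
case/existsP=> a /existsP[b /and3P[ab ae bf]].
by apply/existsP; exists b; apply/existsP; exists a; rewrite ae bf jrel_sym.
Qed.

Lemma cedge_of_erel (e f : bedg H) :
  erel gam flip e f -> cedge_of gam flip e = cedge_of gam flip f.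
Proof.
move=> ef; apply: val_inj; apply/setP => z; rewrite !inE.
by apply: same_connect; [exact: sym_connect_sym erel_sym | exact: connect1].
Qed.

Variable phi : cedg H gam flip -> colour.

Definition local_col (x : mvtx M) (e : medg (H x)) : colour :=
  phi (cedge_of gam flip (Tagged (fun z => medg (H z)) e)).
Arguments local_col : clear implicits.

Definition end_flow (d : mend M) : colour :=
  if end_vtx d is Some x then flow (local_col x) (gam d) else 0%R.

Definition active (d : mend M) : bool := end_flow d != 0%R.

Lemma flow_junction d1 d2 x y :
  d1 != d2 -> end_edge d1 = end_edge d2 -> end_vtx d1 = Some x -> end_vtx d2 = Some y ->
  flow (local_col x) (gam d1) = flow (local_col y) (gam d2).
Proof.
move=> d12 e12 xd1 yd2; rewrite /flow.
rewrite [RHS](reindex_inj (inv_inj (swap2K (flip (end_edge d1))))).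
apply: eq_bigr => k _; congr phi; apply: cedge_of_erel.
apply/existsP; exists (mkbend (pconn (H x) (gam d1) k)).
apply/existsP; exists (mkbend (pconn (H y) (gam d2) (swap2 (flip (end_edge d1)) k))).
rewrite !eqxx !andbT; apply/existsP; exists d1; apply/existsP; exists d2.
apply/existsP; exists k; apply/existsP; exists x; apply/existsP; exists y.
by rewrite d12 e12 xd1 yd2 !eqxx.
Qed.

Hypothesis H_pole : forall x, is_pole222 (H x).

Variables (v : 'I_3 -> mvtx M) (g : 'I_3 -> mend M).

(* Junctions only identify semiedges. *)
Lemma kept_vertex_end x (s : mend (H x)) :
  end_vtx s != None -> kept gam flip v g (mkbend s).
Proof.
move=> sV; apply/orP; left; apply/negP.
case/existsP=> b /existsP[d /existsP[d' /existsP[k /existsP[x' /existsP[y]]]]].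
case/and5P=> _ _ _ _ /andP[/eqP/(congr1 (fun a => end_vtx (tagged a) == None)) /= sE _].
move: sV; rewrite -[_ != _]negbK sE negbK.
by case: (H_pole x') => _ /(_ (pconn (H x') (gam d) k)) [_ ->] //; exists (gam d), k.
Qed.

Lemma local_colouring x :
  @colouring (HM H gam flip v g) phi -> colouring (local_col x).
Proof.
case=> nz0 col; split=> [e|s1 s2 s12 s1V s12V]; first exact: nz0.
have s2V : end_vtx s2 != None by rewrite -s12V.
apply: (col (exist _ (mkbend s1) (kept_vertex_end s1V))
            (exist _ (mkbend s2) (kept_vertex_end s2V))).
- apply/eqP => /(congr1 val) /(congr1 (tagged_as (mkbend s1))).
  by rewrite !tagged_asE; apply/eqP.
- by rewrite /= /cend_vtx /=; move: (s1V); case: (end_vtx s1).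
- by rewrite /= /cend_vtx /= s12V.
Qed.

Lemma flow_HM i :
  end_vtx (g i) = Some (v i) -> @flow (HM H gam flip v g) phi i = end_flow (g i).
Proof. by rewrite /end_flow => ->. Qed.

Hypothesis H_even : forall x, even222 (H x).
Hypothesis M_cubic : cubic M.
Hypothesis gam_inj : forall x d1 d2, end_vtx d1 = Some x -> end_vtx d2 = Some x ->
  gam d1 = gam d2 -> d1 = d2.
Hypothesis phi_col : @colouring (HM H gam flip v g) phi.

Lemma vertex_even x : ~~ odd (\sum_(d | end_vtx d == Some x) active d).
Proof.
rewrite (eq_bigr (fun d => if active d then 1 else 0)) => [|d _]; last by case: active.
rewrite -big_mkcondr /= sum1dep_card.
have -> : [set d | (end_vtx d == Some x) && active d] =
          [set d in [set d | end_vtx d == Some x] | flow (local_col x) (gam d) != 0%R].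
  by apply/setP => d; rewrite !inE /active /end_flow; case: eqP => // ->.
rewrite (card_preim_in_bij (fun i => flow (local_col x) i != 0%R) (f := gam)).
- exact: H_even (local_colouring x phi_col).
- by move=> d1 d2; rewrite !inE => /eqP xd1 /eqP xd2; apply: gam_inj xd1 xd2.
- by rewrite M_cubic card_ord.
Qed.

Lemma ends_even : ~~ odd (\sum_d active d).
Proof.
rewrite (partition_big (@end_vtx M) xpredT) //=.
apply: sum_even => -[x _|_ ]; first exact: vertex_even.
by rewrite big1 // => d /eqP dV; rewrite /active /end_flow dV eqxx.
Qed.

Hypothesis M_two_ended : two_ended M.

Lemma inner_edge_even e :
  (forall d, end_edge d = e -> end_vtx d != None) ->
  ~~ odd (\sum_(d | end_edge d == e) active d).
Proof.
move=> inner; have /eqP/cards2P[d1 [d2 [d12 endsE]]] := M_two_ended e.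
rewrite (eq_bigl (fun d => d \in [set d1; d2])) => [|d]; last by rewrite -endsE inE.
have e1 : end_edge d1 = e by apply/eqP; move: (set21 d1 d2); rewrite -endsE inE.
have e2 : end_edge d2 = e by apply/eqP; move: (set22 d1 d2); rewrite -endsE inE.
case xd1 : (end_vtx d1) (inner d1 e1) => [x|//] _.
case yd2 : (end_vtx d2) (inner d2 e2) => [y|//] _.
rewrite sum_set2 // /active /end_flow xd1 yd2.
by rewrite (flow_junction d12 _ xd1 yd2) ?e1 ?e2 // addnn odd_double.
Qed.

Hypothesis g_vtx : forall i, end_vtx (g i) = Some (v i).
Hypothesis g_free : forall i,
  exists d, [/\ d != g i, end_edge d = end_edge (g i) & end_vtx d = None].

Lemma dangling_edge_ends i d :
  d != g i -> end_edge d = end_edge (g i) ->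
  [set d' | end_edge d' == end_edge (g i)] = [set g i; d].
Proof. by move=> dg de; apply: cards2_eq; rewrite ?inE ?de ?eqxx // eq_sym. Qed.

Lemma dangling_edge_sum i :
  \sum_(d | end_edge d == end_edge (g i)) active d = active (g i).
Proof.
have [d [dg de dV]] := g_free i.
rewrite (eq_bigl (fun d' => d' \in [set g i; d])) => [|d']; last first.
  by rewrite -dangling_edge_ends // inE.
by rewrite sum_set2 1?eq_sym // {2}/active /end_flow dV eqxx addn0.
Qed.

Hypothesis v_inj : injective v.

Lemma dangling_edge_inj : injective (fun i => end_edge (g i)).
Proof.
move=> i j eij; apply/eqP/negPn/negP => ij; have [d [dg de dV]] := g_free i.
have gji : g j != g i.
  by apply: contraNneq ij => gji; apply/eqP/v_inj/Some_inj; rewrite -!g_vtx gji.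
have : g j \in [set d' | end_edge d' == end_edge (g i)] by rewrite inE eij.
rewrite (dangling_edge_ends dg de) !inE (negbTE gji) => /eqP gjd.
by rewrite -gjd g_vtx in dV.
Qed.

Hypothesis free_dangling :
  forall d, end_vtx d = None -> exists i, end_edge d = end_edge (g i).

Lemma odd_dangling : odd (\sum_i active (g i)) = odd (\sum_d active d).
Proof.
pose D := [set end_edge (g i) | i in [set: 'I_3]].
have inner_even : ~~ odd (\sum_(e | e \notin D) \sum_(d | end_edge d == e) active d).
  apply: sum_even => e eD; apply: inner_edge_even => d de; apply/eqP => dV.
  have [i di] := free_dangling dV; case/negP: eD.
  by apply/imsetP; exists i; rewrite ?inE // -de.
rewrite (partition_big (@end_edge M) xpredT) //= (bigID (mem D)) /= oddD.
rewrite (negbTE inner_even) addbF big_imset /=; last first.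
  by move=> i j _ _; apply: dangling_edge_inj.
by congr odd; apply: eq_big => [i|i _]; rewrite ?inE ?dangling_edge_sum.
Qed.

End Composite.

Theorem mainTheorem5 (M : multipole) (H : mvtx M -> pole222)
  (gam : mend M -> 'I_3) (flip : medg M -> bool)
  (v : 'I_3 -> mvtx M) (g : 'I_3 -> mend M) :
  cubic M -> two_ended M ->
  (* each H_x is an even (2,2,2)-pole *)
  (forall x, [/\ cubic (H x), two_ended (H x), is_pole222 (H x) & even222 (H x)]) ->
  (* gam restricted to the three ends at x is a bijection onto the connectors *)
  (forall x d1 d2, end_vtx d1 = Some x -> end_vtx d2 = Some x ->
     gam d1 = gam d2 -> d1 = d2) ->
  (* exactly three dangling edges, at pairwise distinct vertices v_1, v_2, v_3 *)
  injective v ->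
  (forall i, end_vtx (g i) = Some (v i)) ->
  (forall i, exists d, [/\ d != g i, end_edge d = end_edge (g i) & end_vtx d = None]) ->
  (forall d, end_vtx d = None -> exists i, end_edge d = end_edge (g i)) ->
  even222 (HM H gam flip v g).
Proof.
move=> M_cubic M_two HH gam_inj v_inj g_vtx g_free free_dangling phi phi_col.
have H_pole x : is_pole222 (H x) by case: (HH x).
have H_even x : even222 (H x) by case: (HH x).
have -> : #|[set i | flow phi i != 0%R]| = \sum_i active phi (g i).
  rewrite -sum1_card big_mkcond; apply: eq_bigr => i _.
  by rewrite inE flow_HM // /active; case: (_ != _).
rewrite (odd_dangling phi M_two g_vtx g_free v_inj free_dangling).
exact: (ends_even (g := g) H_pole H_even M_cubic gam_inj phi_col).
Qed.
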